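(* Let $n\ge 3$ and let $\{\mathcal{G}_k\}_{k\ge0}$ be any sequence of digraphs on $\mathcal{V}=\{1,\dots,n\}$. For every algorithm in the class $\mathcal{A}_{\rm ave}$ (i.e. every choice of parameters with $\eta_k\in(0,1]$ and $\alpha_k\in[0,1-\eta_k]$ for all $k$), every initial time $k_0\ge 0$ and every initial value $x^0\in\mathbb{R}^n$ not lying on the consensus manifold $\mathrm{C}=\{x\in\mathbb{R}^n: x_1=\dots=x_n\}$, finite-time consensus is not achieved: for every $T\ge k_0$ the states $x_1(T),\dots,x_n(T)$ are not all equal.
   Context: Network of nodes $\mathcal{V}=\{1,\dots,n\}$, discrete time $k=0,1,2,\dots$, state $x_i(k)\in\mathbb{R}$ of node $i$, $x(k)=(x_1(k),\dots,x_n(k))^T$. At each time $k$ a digraph $\mathcal{G}_k=(\mathcal{V},\mathcal{E}_k)$ is given; node $j$ is a neighbor of node $i$ at time $k$ if $(j,i)\in\mathcal{E}_k$, and every node is always a neighbor of itself; $\mathcal{N}_i(k)$ denotes the neighbor set of $i$ at time $k$. The algorithm is $$x_i(k+1)=\eta_k x_i(k)+\alpha_k\min_{j\in\mathcal{N}_i(k)}x_j(k)+(1-\eta_k-\alpha_k)\max_{j\in\mathcal{N}_i(k)}x_j(k),\quad i=1,\dots,n,$$ where $\{\eta_k\},\{\alpha_k\}$ are given real sequences (the same for all nodes) with $\eta_k\ge0,\alpha_k\ge0,\alpha_k+\eta_k\le1$. The class $\mathcal{A}_{\rm ave}$ consists of those algorithms with $\eta_k\in(0,1]$, $\alpha_k\in[0,1-\eta_k]$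 for all $k$. The iteration is started at an initial time $k_0\ge0$ with $x(k_0)=x^0$. Finite-time consensus for $x^0$ means there exist $z_*\in\mathbb{R}$ and an integer $T_*$ with $x_i(T_* )=z_*$ for all $i$. *)

(* Reals are modelled by an arbitrary real field R. *)
From HB Require Import structures.
From mathcomp Require Import all_boot all_order all_algebra.
Set Implicit Arguments. Unset Strict Implicit. Unset Printing Implicit Defensive.
Import Order.TTheory GRing.Theory Num.Theory.
Local Open Scope ring_scope.

(* Nodes are 'I_n (node i+1 of the paper is i : 'I_n).
   A time-varying digraph is  G : nat -> rel 'I_n  with  G k j i  meaning
   (j,i) is an edge of G_k. *)
Definition neighbor (n : nat) (G : nat -> rel 'I_n) (k : nat) (i j : 'I_n) : bool :=
  (j == i) || G k j i.

(* min / max of x over the neighbor set N_i(k) (nonempty since i is in it). *)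
Definition nbr_min (R : realFieldType) (n : nat) (G : nat -> rel 'I_n) (k : nat)
  (x : 'I_n -> R) (i : 'I_n) : R :=
  foldr Num.min (x i) [seq x j | j <- enum 'I_n & neighbor G k i j].

Definition nbr_max (R : realFieldType) (n : nat) (G : nat -> rel 'I_n) (k : nat)
  (x : 'I_n -> R) (i : 'I_n) : R :=
  foldr Num.max (x i) [seq x j | j <- enum 'I_n & neighbor G k i j].

Definition step (R : realFieldType) (n : nat) (G : nat -> rel 'I_n)
  (eta alpha : nat -> R) (k : nat) (x : 'I_n -> R) : 'I_n -> R :=
  fun i => eta k * x i + alpha k * nbr_min G k x i
           + (1 - eta k - alpha k) * nbr_max G k x i.

(* traj ... k0 x0 m = x(k0 + m), the state m steps after starting at time k0. *)
Fixpoint traj (R : realFieldType) (n : nat) (G : nat -> rel 'I_n)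
  (eta alpha : nat -> R) (k0 : nat) (x0 : 'I_n -> R) (m : nat) : 'I_n -> R :=
  match m with
  | 0 => x0
  | m'.+1 => step G eta alpha (k0 + m') (traj G eta alpha k0 x0 m')
  end.

Definition state (R : realFieldType) (n : nat) (G : nat -> rel 'I_n)
  (eta alpha : nat -> R) (k0 : nat) (x0 : 'I_n -> R) (T : nat) : 'I_n -> R :=
  traj G eta alpha k0 x0 (T - k0).

Definition consensus (R : realFieldType) (n : nat) (x : 'I_n -> R) : Prop :=
  forall i j : 'I_n, x i = x j.

Definition in_A_ave (R : realFieldType) (eta alpha : nat -> R) : Prop :=
  forall k, (0 < eta k <= 1) /\ (0 <= alpha k <= 1 - eta k).

From HB Require Import structures.
From mathcomp Require Import all_boot all_order all_algebra.
From mathcomp Require Import lra.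
Set Implicit Arguments. Unset Strict Implicit. Unset Printing Implicit Defensive.
Import Order.TTheory GRing.Theory Num.Theory.
Local Open Scope ring_scope.

(* Let x be a state that is not a consensus, with a node [i]
   attaining the global maximum M of x and a node [j] attaining the global
   minimum m < M.  The neighbourhood extrema seen by [i] are at least those
   seen by [j] (node [i] sees M, node [j] sees m, and everything lies in
   [m, M]), so with weights eta, alpha, 1 - eta - alpha >= 0 the next states
   satisfy
       x_i(k+1) - x_j(k+1) >= eta_k (M - m) > 0,
   because eta_k > 0 in the class A_ave.  Hence one step never reaches the
   consensus manifold, and by induction no step after k0 does. *)

Lemma foldr_max_ge (R : realFieldType) (a : R) (s : seq R) :
  a <= foldr Num.max a s.
Proof. by elim: s => //= y s IH; rewrite le_max IH orbT. Qed.

Lemma foldr_max_le (R : realFieldType) (a B : R) (s : seq R) :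
  a <= B -> all (<= B) s -> foldr Num.max a s <= B.
Proof. by move=> aB; elim: s => //= y s IH /andP[yB sB]; rewrite ge_max yB IH. Qed.

Lemma foldr_min_le (R : realFieldType) (a : R) (s : seq R) :
  foldr Num.min a s <= a.
Proof. by elim: s => //= y s IH; rewrite ge_min IH orbT. Qed.

Lemma foldr_min_ge (R : realFieldType) (a B : R) (s : seq R) :
  B <= a -> all (>= B) s -> B <= foldr Num.min a s.
Proof. by move=> Ba; elim: s => //= y s IH /andP[By sB]; rewrite le_min By IH. Qed.

Section NeighbourhoodExtrema.
Variables (R : realFieldType) (n : nat) (G : nat -> rel 'I_n) (k : nat).
Variable x : 'I_n -> R.

Lemma nbr_max_ge_self (i : 'I_n) : x i <= nbr_max G k x i.
Proof. exact: foldr_max_ge. Qed.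

Lemma nbr_min_le_self (i : 'I_n) : nbr_min G k x i <= x i.
Proof. exact: foldr_min_le. Qed.

Lemma nbr_max_le (B : R) (i : 'I_n) :
  (forall l, x l <= B) -> nbr_max G k x i <= B.
Proof. by move=> xB; apply: foldr_max_le => //; apply/allP => _ /mapP[l _ ->]; exact: xB. Qed.

Lemma nbr_min_ge (B : R) (i : 'I_n) :
  (forall l, B <= x l) -> B <= nbr_min G k x i.
Proof. by move=> Bx; apply: foldr_min_ge => //; apply/allP => _ /mapP[l _ ->]; exact: Bx. Qed.

End NeighbourhoodExtrema.

Lemma noncons_extremes (R : realFieldType) (n : nat) (x : 'I_n -> R) :
  ~ consensus x ->
  exists i j, [/\ forall l, x l <= x i, forall l, x j <= x l & x j < x i].
Proof.
case: n x => [|n] x hx; first by case: hx => -[].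
have [i _ maxi] := @arg_maxP _ R _ ord0 predT x isT.
have [j _ minj] := @arg_minP _ R _ ord0 predT x isT.
exists i, j; split=> [l|l|]; [exact: maxi | exact: minj |].
rewrite lt_neqAle (le_trans (minj ord0 isT) (maxi ord0 isT)) andbT.
apply: contra_notN hx => /eqP eq_ji a b.
have below_min l : x l <= x j by rewrite eq_ji; exact: maxi.
have flat l l' : x l <= x l' := le_trans (below_min l) (minj l' isT).
by apply/eqP; rewrite eq_le !flat.
Qed.

Lemma step_gap (R : realFieldType) (n : nat) (G : nat -> rel 'I_n)
    (eta alpha : nat -> R) (k : nat) (x : 'I_n -> R) (i j : 'I_n) :
  0 <= alpha k -> alpha k <= 1 - eta k ->
  (forall l, x l <= x i) -> (forall l, x j <= x l) ->
  eta k * (x i - x j) <= step G eta alpha k x i - step G eta alpha k x j.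
Proof.
move=> alpha_ge0 alpha_le maxi minj.
have min_mono : nbr_min G k x j <= nbr_min G k x i.
  exact: le_trans (nbr_min_le_self G k x j) (nbr_min_ge G k i minj).
have max_mono : nbr_max G k x j <= nbr_max G k x i.
  exact: le_trans (nbr_max_le G k j maxi) (nbr_max_ge_self G k x i).
have min_term : 0 <= alpha k * (nbr_min G k x i - nbr_min G k x j).
  by rewrite mulr_ge0 // subr_ge0.
have max_term : 0 <= (1 - eta k - alpha k) * (nbr_max G k x i - nbr_max G k x j).
  by rewrite mulr_ge0 // ?subr_ge0 // lerBrDr add0r.
rewrite /step; rewrite !mulrBr in min_term max_term *; lra.
Qed.

Lemma step_noncons (R : realFieldType) (n : nat) (G : nat -> rel 'I_n)
    (eta alpha : nat -> R) (hA : in_A_ave eta alpha) (k : nat) (x : 'I_n -> R) :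
  ~ consensus x -> ~ consensus (step G eta alpha k x).
Proof.
move=> /noncons_extremes[i [j [maxi minj ji]]] cons_next.
have [/andP[eta_gt0 _] /andP[alpha_ge0 alpha_le]] := hA k.
have gap := step_gap G alpha_ge0 alpha_le maxi minj.
move: gap; rewrite (cons_next i j) subrr leNgt => /negP; apply.
by rewrite mulr_gt0 // subr_gt0.
Qed.

Theorem theorem1 (R : realFieldType) (n : nat) (hn : (3 <= n)%N)
  (G : nat -> rel 'I_n) (eta alpha : nat -> R)
  (hA : in_A_ave eta alpha) (k0 : nat) (x0 : 'I_n -> R)
  (hx0 : ~ consensus x0) :
  forall T : nat, (k0 <= T)%N -> ~ consensus (state G eta alpha k0 x0 T).
Proof.
move=> T _; rewrite /state; elim: (T - k0)%N => //= m IH.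
exact: step_noncons.
Qed.
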